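(* Let $\mathbb{X},\mathbb{Y}$ be finite-dimensional real polyhedral Banach spaces and let $T\in\mathbb{L}(\mathbb{X},\mathbb{Y})$ be bijective. Then the following are equivalent: (a) $T$ preserves parallel pairs; (b) $T$ preserves TEA pairs; (c) for each $f\in\mathrm{Ext}\,B_{\mathbb{X}^*}$ there exists a unique $g\in\mathrm{Ext}\,B_{\mathbb{Y}^*}$ such that $T(\mathrm{Sm}(f))\subset\mathrm{Sm}(g)$.
   Context: A finite-dimensional Banach space is polyhedral if its unit ball has finitely many extreme points. $\mathrm{Ext}\,B_{\mathbb{X}^*}$ is the set of extreme points of the dual unit ball. For non-zero $x$, $J(x)=\{f\in S_{\mathbb{X}^*}: f(x)=\|x\|\}$. For $f\in\mathrm{Ext}\,B_{\mathbb{X}^*}$, $\mathrm{Sm}(f)=\{x\in\mathbb{X}: J(x)=\{f\}\}$. $(x,y)$ is a parallel pair if $\|x+\lambda y\|=\|x\|+\|y\|$ for some $\lambda$ with $|\lambda|=1$; a TEA pair if $\|x+y\|=\|x\|+\|y\|$. $T$ preserves parallel (resp. TEA) pairs if $(x,y)$ parallel (resp. TEA) in $\mathbb{X}$ implies $(Tx,Ty)$ parallel (resp. TEA) in $\mathbb{Y}$. *)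

From HB Require Import structures.
From mathcomp Require Import all_boot all_order all_algebra.
From mathcomp Require Import all_classical all_reals.
Set Implicit Arguments. Unset Strict Implicit. Unset Printing Implicit Defensive.
Import Order.TTheory GRing.Theory Num.Theory.
Local Open Scope ring_scope.
Local Open Scope classical_set_scope.

(* A finite-dimensional real normed space of dimension n is modelled as
   'rV[R]_n equipped with an arbitrary norm N. *)
Definition is_norm (R : realType) (n : nat) (N : 'rV[R]_n -> R) : Prop :=
  [/\ forall x, N x = 0 -> x = 0,
      forall (a : R) x, N (a *: x) = `|a| * N x
    & forall x y, N (x + y) <= N x + N y].

(* Linear functionals on 'rV_n are represented by column vectors. *)
Definition fapp (R : realType) (n : nat) (f : 'cV[R]_n) (x : 'rV[R]_n) : R :=
  (x *m f) 0 0.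

Definition dualnorm (R : realType) (n : nat) (N : 'rV[R]_n -> R) (f : 'cV[R]_n) : R :=
  sup [set `|fapp f x| | x in [set x | N x <= 1]].

Definition unit_ball (R : realType) (n : nat) (N : 'rV[R]_n -> R) : set 'rV[R]_n :=
  [set x | N x <= 1].

Definition dual_unit_ball (R : realType) (n : nat) (N : 'rV[R]_n -> R) : set 'cV[R]_n :=
  [set f | dualnorm N f <= 1].

Definition extreme (R : realType) (V : lmodType R) (C : set V) : set V :=
  [set v | C v /\ forall (a b : V) (t : R), C a -> C b -> 0 < t < 1 ->
             v = t *: a + (1 - t) *: b -> a = v /\ b = v].

Definition polyhedral (R : realType) (n : nat) (N : 'rV[R]_n -> R) : Prop :=
  finite_set (extreme (unit_ball N)).

Definition Jset (R : realType) (n : nat) (N : 'rV[R]_n -> R) (x : 'rV[R]_n) : set 'cV[R]_n :=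
  [set f | dualnorm N f = 1 /\ fapp f x = N x].

Definition Sm (R : realType) (n : nat) (N : 'rV[R]_n -> R) (f : 'cV[R]_n) : set 'rV[R]_n :=
  [set x | x != 0 /\ Jset N x = [set f]].

Definition parallel_pair (R : realType) (n : nat) (N : 'rV[R]_n -> R) (x y : 'rV[R]_n) : Prop :=
  exists l : R, `|l| = 1 /\ N (x + l *: y) = N x + N y.

Definition tea_pair (R : realType) (n : nat) (N : 'rV[R]_n -> R) (x y : 'rV[R]_n) : Prop :=
  N (x + y) = N x + N y.

(* The finite-dimensional tools are Minkowski's theorem (the unit ball is the
   convex hull of its extreme points) and a Hahn-Banach extension: together they
   identify the dual ball of a polyhedral space with the polytope cut out by the
   finitely many extreme points of the ball, whose own extreme points are finite
   in number.  For an extreme functional f, Sm f is then nonempty, convex and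
   radially open.

   (b) -> (a) is immediate.  If T preserves TEA pairs, any point of Sm f lies
   strictly inside a segment of Sm f through any other, so all points of
   T (Sm f) have the same support functionals; moving in every direction shows
   there is only one, g, which is then extreme.  Conversely, (a) or (c) gives
   for each f one functional g norming all of T (Sm f).  A TEA pair (x, y) is
   normed by a common extreme f and is a limit of points of Sm f, so g norms
   T x and T y, and (T x, T y) is TEA.  Under (a), g is obtained from a generic
   z of Sm f with J (T z) = {g}: parallel pairs (z, z') force |g| = ||.|| on T
   of the segment from z to z' in Sm f, and a change of sign along it would
   make T vanish on it. *)

From HB Require Import structures.
From mathcomp Require Import all_boot all_order all_algebra.
From mathcomp Require Import all_classical all_reals.
From mathcomp Require Import ring lra.
Import Order.TTheory GRing.Theory Num.Theory.
Local Open Scope ring_scope.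
Local Open Scope classical_set_scope.

Set Implicit Arguments. Unset Strict Implicit. Unset Printing Implicit Defensive.

Section Fapp.
Variables (R : realType) (n : nat).
Implicit Types (f g : 'cV[R]_n) (x y : 'rV[R]_n).

Lemma fappDr f x y : fapp f (x + y) = fapp f x + fapp f y.
Proof. by rewrite /fapp mulmxDl mxE. Qed.

Lemma fappZr f a x : fapp f (a *: x) = a * fapp f x.
Proof. by rewrite /fapp -scalemxAl mxE. Qed.

Lemma fappNr f x : fapp f (- x) = - fapp f x.
Proof. by rewrite /fapp mulNmx mxE. Qed.

Lemma fapp0r f : fapp f 0 = 0.
Proof. by rewrite /fapp mul0mx mxE. Qed.

Lemma fapp_sumr (I : Type) (s : seq I) (F : I -> 'rV[R]_n) f :
  fapp f (\sum_(i <- s) F i) = \sum_(i <- s) fapp f (F i).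
Proof. by rewrite /fapp mulmx_suml summxE. Qed.

Lemma fappDl f g x : fapp (f + g) x = fapp f x + fapp g x.
Proof. by rewrite /fapp mulmxDr mxE. Qed.

Lemma fappZl a f x : fapp (a *: f) x = a * fapp f x.
Proof. by rewrite /fapp -scalemxAr mxE. Qed.

Lemma fappNl f x : fapp (- f) x = - fapp f x.
Proof. by rewrite /fapp mulmxN mxE. Qed.

Lemma fappBl f g x : fapp (f - g) x = fapp f x - fapp g x.
Proof. by rewrite fappDl fappNl. Qed.

Lemma fapp0l x : fapp 0 x = 0.
Proof. by rewrite /fapp mulmx0 mxE. Qed.

Lemma fapp_suml (I : Type) (s : seq I) (F : I -> 'cV[R]_n) x :
  fapp (\sum_(i <- s) F i) x = \sum_(i <- s) fapp (F i) x.
Proof. by rewrite /fapp mulmx_sumr summxE. Qed.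

Lemma fapp_inj f g : (forall x, fapp f x = fapp g x) -> f = g.
Proof.
move=> fg; apply/matrixP => i j; rewrite (ord1 j).
by have := fg (delta_mx 0 i); rewrite /fapp -!rowE !mxE.
Qed.

End Fapp.

Section Norm.
Variables (R : realType) (n : nat) (N : 'rV[R]_n -> R) (hN : is_norm N).
Implicit Types (x y : 'rV[R]_n).

Lemma N_eq0 x : N x = 0 -> x = 0. Proof. by case: hN => h _ _; exact: h. Qed.
Lemma NZ a x : N (a *: x) = `|a| * N x. Proof. by case: hN. Qed.
Lemma ND x y : N (x + y) <= N x + N y. Proof. by case: hN. Qed.

Lemma N0 : N 0 = 0.
Proof. by rewrite -(scale0r (0 : 'rV[R]_n)) NZ normr0 mul0r. Qed.

Lemma NN x : N (- x) = N x.
Proof. by rewrite -scaleN1r NZ normrN normr1 mul1r. Qed.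

Lemma NB x y : N (x - y) <= N x + N y.
Proof. by rewrite -(NN y) ND. Qed.

Lemma N_ge0 x : 0 <= N x.
Proof. by have := ND x (- x); rewrite subrr N0 NN; lra. Qed.

Lemma N_gt0 x : x != 0 -> 0 < N x.
Proof. by move=> x0; rewrite lt_def N_ge0 andbT; apply: contraNneq x0 => /N_eq0 ->. Qed.

Lemma N_sum (I : Type) (s : seq I) (F : I -> 'rV[R]_n) :
  N (\sum_(i <- s) F i) <= \sum_(i <- s) N (F i).
Proof.
elim: s => [|a s IH]; first by rewrite !big_nil N0.
by rewrite !big_cons (le_trans (ND _ _)) // lerD2l.
Qed.

Lemma N_normalize x : x != 0 -> N ((N x)^-1 *: x) = 1.
Proof.
by move=> x0; rewrite NZ ger0_norm ?invr_ge0 ?N_ge0 // mulVf // gt_eqF ?N_gt0.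
Qed.

Lemma fapp_le_of_ball (f : 'cV[R]_n) c :
  (forall x, N x <= 1 -> fapp f x <= c) -> forall x, fapp f x <= c * N x.
Proof.
move=> fc x; have [->|x0] := eqVneq x 0; first by rewrite fapp0r N0 mulr0.
have := fc ((N x)^-1 *: x); rewrite N_normalize // lexx fappZr => /(_ isT).
by rewrite mulrC ler_pdivrMr // N_gt0.
Qed.

End Norm.

Section HahnBanach.
Variables (R : realType) (n : nat) (N : 'rV[R]_n -> R) (hN : is_norm N).
Implicit Types (M : set 'rV[R]_n) (f : 'rV[R]_n -> R) (x y u v : 'rV[R]_n).

Definition subspace M := M 0 /\ forall a x y, M x -> M y -> M (a *: x + y).
Definition linear_on M f := forall a x y, M x -> M y -> f (a *: x + y) = a * f x + f y.
Definition dominated_on M f := forall x, M x -> f x <= N x.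

Lemma subspaceZ M a x : subspace M -> M x -> M (a *: x).
Proof. by move=> hM Mx; have := hM.2 a x 0 Mx hM.1; rewrite addr0. Qed.

Lemma subspaceD M x y : subspace M -> M x -> M y -> M (x + y).
Proof. by move=> hM Mx My; have := hM.2 1 x y Mx My; rewrite scale1r. Qed.

Lemma linear_on0 M f : subspace M -> linear_on M f -> f 0 = 0.
Proof.
move=> hM hf; have := hf 1 0 0 hM.1 hM.1; rewrite scale1r addr0 mul1r => h.
by apply: (addrI (f 0)); rewrite addr0 -h.
Qed.

Lemma linear_onZ M f a x : subspace M -> linear_on M f -> M x -> f (a *: x) = a * f x.
Proof.
by move=> hM hf Mx; have := hf a x 0 Mx hM.1; rewrite !addr0 (linear_on0 hM hf) addr0.
Qed.

Lemma linear_onD M f x y : linear_on M f -> M x -> M y -> f (x + y) = f x + f y.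
Proof. by move=> hf Mx My; have := hf 1 x y Mx My; rewrite scale1r mul1r. Qed.

Lemma hb_gap M f v : subspace M -> linear_on M f -> dominated_on M f ->
  exists c, (forall u, M u -> f u - N (u - v) <= c) /\
            (forall u, M u -> c <= N (u + v) - f u).
Proof.
move=> hM hf hd.
have sep u u' : M u -> M u' -> f u - N (u - v) <= N (u' + v) - f u'.
  move=> Mu Mu'; rewrite lerBrDr addrAC lerBlDr -(linear_onD hf Mu Mu').
  apply: le_trans (hd _ (subspaceD hM Mu Mu')) _.
  have -> : u + u' = (u - v) + (u' + v) by rewrite addrACA addNr addr0.
  by have := ND hN (u - v) (u' + v); lra.
pose A := [set f u - N (u - v) | u in M].
have supA : has_sup A.
  split; first by exists (f 0 - N (0 - v)), 0; first exact: hM.1.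
  by exists (N (0 + v) - f 0) => _ [u Mu <-]; exact: sep _ _ Mu hM.1.
exists (sup A); split => [u Mu|u Mu]; first by apply: sup_upper_bound => //; exists u.
by apply: ge_sup => [|_ [w Mw <-]]; [case: supA | exact: sep].
Qed.

Lemma hb_gap_dominated M f v c : subspace M -> linear_on M f -> dominated_on M f ->
  (forall u, M u -> f u - N (u - v) <= c) -> (forall u, M u -> c <= N (u + v) - f u) ->
  forall u s, M u -> f u + s * c <= N (u + s *: v).
Proof.
move=> hM hf hd c1 c2 u s Mu.
have rescale r d : 0 < r -> r * N (r^-1 *: u + d) = N (u + r *: d).
  move=> r0; rewrite -[X in X * _]gtr0_norm // -(NZ hN) scalerDr scalerA.
  by rewrite mulfV ?gt_eqF // scale1r.
have [s0|s0|->] := ltgtP s 0; last by rewrite mul0r scale0r !addr0; exact: hd.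
- have ns0 : 0 < - s by rewrite oppr_gt0.
  have := ler_wpM2l (ltW ns0) (c1 _ (subspaceZ ((- s)^-1) hM Mu)).
  rewrite (linear_onZ _ hM hf) // mulrBr mulrA mulfV ?gt_eqF // mul1r.
  by rewrite rescale // scalerN scaleNr opprK; lra.
- have := ler_wpM2l (ltW s0) (c2 _ (subspaceZ (s^-1) hM Mu)).
  rewrite (linear_onZ _ hM hf) // mulrBr mulrA mulfV ?gt_eqF // mul1r rescale //.
  lra.
Qed.

Lemma hb_step M f v c : subspace M -> linear_on M f -> dominated_on M f -> ~ M v ->
  (forall u, M u -> f u - N (u - v) <= c) -> (forall u, M u -> c <= N (u + v) - f u) ->
  exists M' f', [/\ subspace M', M `<=` M', M' v, linear_on M' f' & dominated_on M' f'] /\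
    ((forall x, M x -> f' x = f x) /\ f' v = c).
Proof.
move=> hM hf hd Mv c1 c2.
pose P w := [set p : 'rV[R]_n * R | M p.1 /\ w = p.1 + p.2 *: v].
pose M' w := exists p, P w p.
pose f' w := let p := xget (0, 0) (P w) in f p.1 + p.2 * c.
have decomp_uniq u s u' s' : M u -> M u' -> u + s *: v = u' + s' *: v -> u = u' /\ s = s'.
  move=> Mu Mu' e; suff ss : s = s' by split => //; move: e; rewrite ss; exact: addIr.
  apply: contra_notP Mv => /eqP; rewrite -subr_eq0 => ss.
  have -> : v = (s - s')^-1 *: ((s - s') *: v) by rewrite scalerA mulVf // scale1r.
  have -> : (s - s') *: v = u' - u.
    by rewrite scalerBl -[s *: v](addKr u) e addrA addrK addrC.
  by apply: subspaceZ => //; rewrite addrC -scaleN1r; exact: hM.2.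
have f'E u s : M u -> f' (u + s *: v) = f u + s * c.
  move=> Mu; rewrite /f'; have Pus : P (u + s *: v) (u, s) by split.
  have := xgetPex (0, 0) (ex_intro _ _ Pus); case: xget => u' s' [/= Mu' e].
  by have [-> ->] := decomp_uniq _ _ _ _ Mu Mu' e.
have combE a u1 s1 u2 s2 : a *: (u1 + s1 *: v) + (u2 + s2 *: v) =
    (a *: u1 + u2) + (a * s1 + s2) *: v.
  by rewrite scalerDr scalerDl scalerA addrACA.
exists M', f'; split; first split.
- split; first by exists (0, 0); rewrite /P /= scale0r addr0; split => //; exact: hM.1.
  move=> a _ _ [[u1 s1] [/= Mu1 ->]] [[u2 s2] [/= Mu2 ->]].
  by exists (a *: u1 + u2, a * s1 + s2); rewrite combE; split => //; exact: hM.2.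
- by move=> x Mx; exists (x, 0); rewrite /P /= scale0r addr0.
- by exists (0, 1); rewrite /P /= scale1r add0r; split => //; exact: hM.1.
- move=> a _ _ [[u1 s1] [/= Mu1 ->]] [[u2 s2] [/= Mu2 ->]].
  rewrite combE !f'E ?hf //; last exact: hM.2.
  by rewrite mulrDl mulrDr mulrA addrACA.
- move=> _ [[u s] [/= Mu ->]]; rewrite f'E //.
  exact: (hb_gap_dominated hM hf hd c1 c2).
split; first by move=> x Mx; have := f'E x 0 Mx; rewrite scale0r addr0 mul0r addr0.
by have := f'E 0 1 hM.1; rewrite scale1r add0r mul1r (linear_on0 hM hf) add0r.
Qed.

Lemma hb_extend x0 k : (k <= n)%N -> exists M f, [/\ subspace M, M x0,
  (forall i : 'I_n, (i < k)%N -> M (delta_mx 0 i)), linear_on M f & dominated_on M f]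
  /\ f x0 = N x0.
Proof.
elim: k => [_|k IH kn].
  have M0 : subspace [set 0] by split => //= a _ _ -> ->; rewrite scaler0 addr0.
  have l0 : linear_on [set 0] (fun=> 0) by move=> *; rewrite mulr0 addr0.
  have d0 : dominated_on [set 0] (fun=> 0) by move=> _ ->; rewrite (N0 hN).
  have [->|x0n] := eqVneq x0 0.
    by exists [set 0], (fun=> 0); split; [split | rewrite (N0 hN)].
  have [|||M [f [[hM _ Mx0 hf hd] [_ fx0]]]] := hb_step (v := x0) (c := N x0) M0 l0 d0.
  - by move=> /= x0_0; rewrite x0_0 eqxx in x0n.
  - by move=> _ -> /=; rewrite !sub0r (NN hN); have := N_ge0 hN x0; lra.
  - by move=> _ -> /=; rewrite add0r subr0.
  by exists M, f.
have [M [f [[hM Mx0 Mi hf hd] fx0]]] := IH (ltnW kn).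
pose ek := delta_mx 0 (Ordinal kn) : 'rV[R]_n.
have Mlt (M' : set 'rV[R]_n) : M `<=` M' -> M' ek ->
    forall i : 'I_n, (i < k.+1)%N -> M' (delta_mx 0 i).
  move=> MM' M'k i; rewrite ltnS leq_eqVlt => /orP [/eqP ik|ik]; last exact/MM'/Mi.
  by rewrite (_ : i = Ordinal kn) //; apply: val_inj.
have [Mk|Mk] := pselect (M ek); first by exists M, f; split => //; split => //; exact: Mlt.
have [c [c1 c2]] := hb_gap ek hM hf hd.
have [M' [f' [[hM' MM' Mv hf' hd'] [ff' _]]]] := hb_step hM hf hd Mk c1 c2.
exists M', f'; split; last by rewrite ff'.
by split => //; [exact: MM' | exact: Mlt].
Qed.

Lemma hahn_banach x0 : exists f : 'cV[R]_n, (forall x, fapp f x <= N x) /\ fapp f x0 = N x0.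
Proof.
have [M [f [[hM _ Mi hf hd] fx0]]] := hb_extend x0 (leqnn n).
have comb (a : 'I_n -> R) (r : seq 'I_n) : M (\sum_(j <- r) a j *: delta_mx 0 j) /\
    f (\sum_(j <- r) a j *: delta_mx 0 j) = \sum_(j <- r) a j * f (delta_mx 0 j).
  elim: r => [|j r [IH1 IH2]].
    by rewrite !big_nil (linear_on0 hM hf); split => //; exact: hM.1.
  have Mj : M (delta_mx 0 j) by exact: Mi.
  by rewrite !big_cons hf ?IH2 //; split => //; exact: hM.2.
pose c : 'cV[R]_n := \col_i f (delta_mx 0 i).
have fE x : f x = fapp c x.
  rewrite /fapp mxE [in LHS](row_sum_delta x) (comb _ _).2.
  by apply: eq_bigr => j _; rewrite mxE.
exists c; split => [x|]; last by rewrite -fE.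
by rewrite -fE; apply: hd; rewrite (row_sum_delta x); exact: (comb _ _).1.
Qed.

End HahnBanach.

Section Hull.
Variables (R : realType) (V : lmodType R).
Implicit Types (S : set V) (x : V).

Definition in_hull S x := exists s : seq (R * V),
  [/\ forall p, p \in s -> 0 <= p.1 /\ S p.2, \sum_(p <- s) p.1 = 1 &
      x = \sum_(p <- s) p.1 *: p.2].

Lemma in_hull1 S x : S x -> in_hull S x.
Proof.
move=> Sx; exists [:: (1, x)]; rewrite !big_seq1 scale1r; split => // p.
by rewrite inE => /eqP -> /=.
Qed.

Lemma in_hull_comb S a b t : in_hull S a -> in_hull S b -> 0 <= t <= 1 ->
  in_hull S (t *: a + (1 - t) *: b).
Proof.
move=> [sa [pa sa1 ->]] [sb [pb sb1 ->]] /andP [t0 t1].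
exists ([seq (t * p.1, p.2) | p <- sa] ++ [seq ((1 - t) * p.1, p.2) | p <- sb]); split.
- move=> p; rewrite mem_cat => /orP [] /mapP [q qs ->] /=.
    by have [q0 Sq] := pa q qs; split => //; exact: mulr_ge0.
  by have [q0 Sq] := pb q qs; split => //; apply: mulr_ge0 => //; rewrite subr_ge0.
- by rewrite big_cat !big_map /= -!mulr_sumr sa1 sb1 !mulr1 addrC subrK.
- rewrite big_cat !big_map /= !scaler_sumr.
  by congr (_ + _); apply: eq_bigr => p _; rewrite scalerA.
Qed.

End Hull.

Section Minkowski.
Variables (R : realType) (n : nat) (N : 'rV[R]_n -> R) (hN : is_norm N).
Implicit Types (x y z d : 'rV[R]_n).

Lemma ball_convex x z t : N x <= 1 -> N z <= 1 -> 0 <= t <= 1 ->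
  N (t *: x + (1 - t) *: z) <= 1.
Proof.
move=> hx hz /andP [t0 t1]; apply: le_trans (ND hN _ _) _.
rewrite !(NZ hN) !ger0_norm ?subr_ge0 //.
by have := N_ge0 hN x; have := N_ge0 hN z; nra.
Qed.

Lemma ball_segment y d e s : N y <= 1 -> N (y + e *: d) <= 1 -> 0 < e -> 0 <= s <= e ->
  N (y + s *: d) <= 1.
Proof.
move=> hy hd e0 /andP [s0 se].
have -> : y + s *: d = (s / e) *: (y + e *: d) + (1 - s / e) *: y.
  by apply/matrixP => i j; rewrite !mxE; field; exact: lt0r_neq0.
by apply: ball_convex => //; rewrite divr_ge0 ?ler_pdivrMr ?mul1r // ltW.
Qed.

Definition ball_dirs y :=
  [set d | exists e, 0 < e /\ N (y + e *: d) <= 1 /\ N (y - e *: d) <= 1].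

Lemma ball_dirs0 y : N y <= 1 -> ball_dirs y 0.
Proof. by exists 1; rewrite scaler0 addr0 subr0. Qed.

Lemma ball_dirsN y d : ball_dirs y d -> ball_dirs y (- d).
Proof. by move=> [e [e0 [h1 h2]]]; exists e; rewrite scalerN opprK. Qed.

Lemma ball_dirsZ y a d : N y <= 1 -> ball_dirs y d -> ball_dirs y (a *: d).
Proof.
move=> hy hd; have [a0|a0|->] := ltgtP a 0; last by rewrite scale0r; exact: ball_dirs0.
  rewrite -(opprK a) scaleNr; apply: ball_dirsN.
  move: hd => [e [e0 h]]; exists (e / - a); rewrite divr_gt0 ?oppr_gt0 //.
  by rewrite scalerA mulfVK ?lt0r_neq0 ?oppr_gt0.
move: hd => [e [e0 h]]; exists (e / a); rewrite divr_gt0 //.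
by rewrite scalerA mulfVK ?gt_eqF.
Qed.

Lemma ball_dirsD y d1 d2 : N y <= 1 -> ball_dirs y d1 -> ball_dirs y d2 ->
  ball_dirs y (d1 + d2).
Proof.
move=> hy [e1 [e10 [h11 h12]]] [e2 [e20 [h21 h22]]].
pose e := Num.min e1 e2.
have e0 : 0 < e by rewrite lt_min e10 e20.
have seg d e' : N (y + e' *: d) <= 1 -> 0 < e' -> e <= e' -> N (y + e *: d) <= 1.
  by move=> h e'0 ee'; apply: ball_segment h e'0 _ => //; rewrite (ltW e0).
have mid d d' : N (y + e *: d) <= 1 -> N (y + e *: d') <= 1 ->
    N (y + (e / 2) *: (d + d')) <= 1.
  move=> g g'; have -> : y + (e / 2) *: (d + d') =
     (1 / 2) *: (y + e *: d) + (1 - 1 / 2) *: (y + e *: d').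
    by apply/matrixP => i j; rewrite !mxE; field.
  by apply: ball_convex => //; apply/andP; split; lra.
exists (e / 2); split; first by rewrite divr_gt0.
split; first by apply: mid; [apply: seg h11 e10 _ | apply: seg h21 e20 _];
  rewrite ge_min lexx ?orbT.
rewrite -scalerN opprD; apply: mid.
  by apply: (seg _ e1); rewrite ?scalerN // ge_min lexx.
by apply: (seg _ e2); rewrite ?scalerN // ge_min lexx orbT.
Qed.

Lemma ball_dirs_mulmx y k (c : 'rV[R]_k) (W : 'M[R]_(k, n)) : N y <= 1 ->
  (forall i, ball_dirs y (row i W)) -> ball_dirs y (c *m W).
Proof.
move=> hy hW; rewrite mulmx_sum_row; apply: (big_ind (ball_dirs y)).
- exact: ball_dirs0.
- by move=> d d'; apply: ball_dirsD.
- by move=> i _; apply: ball_dirsZ.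
Qed.

Lemma extreme_of_ball_dirs y : N y <= 1 -> (forall d, ball_dirs y d -> d = 0) ->
  extreme (unit_ball N) y.
Proof.
move=> hy y_dirs; split => // x z t hx hz /andP [t0 t1] ey.
have ex : y + (1 - t) *: (x - z) = x by rewrite ey; apply/matrixP => i j; rewrite !mxE; ring.
have ez : y + t *: - (x - z) = z by rewrite ey; apply/matrixP => i j; rewrite !mxE; ring.
pose e := Num.min t (1 - t).
have e0 : 0 < e by rewrite lt_min t0 subr_gt0 t1.
have : ball_dirs y (x - z).
  exists e; split => //; split.
    apply: (@ball_segment y (x - z) (1 - t)); rewrite ?ex ?subr_gt0 //.
    by rewrite (ltW e0) ge_min lexx orbT.
  rewrite -scalerN; apply: (@ball_segment y _ t); rewrite ?ez //.
  by rewrite (ltW e0) ge_min lexx.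
move/y_dirs/eqP; rewrite subr_eq0 => /eqP xz.
by rewrite ey -xz; split => //; apply/matrixP => i j; rewrite !mxE; ring.
Qed.

Lemma ball_exit y d : N y <= 1 -> ball_dirs y d -> d != 0 -> exists s,
  [/\ 0 < s, N (y + s *: d) <= 1 & forall e, 0 < e -> 1 < N (y + (s + e) *: d)].
Proof.
move=> hy [e [e0 [he _]]] d0.
have Nd : 0 < N d := N_gt0 hN d0.
pose S := [set s : R | 0 <= s /\ N (y + s *: d) <= 1].
have S_ub s : S s -> s <= (1 + N y) / N d.
  move=> [s0 hs]; rewrite ler_pdivlMr //.
  have := NB hN (y + s *: d) y; rewrite addrAC subrr add0r (NZ hN) ger0_norm //.
  lra.
have supS : has_sup S.
  by split; [exists 0; split; rewrite ?scale0r ?addr0 | exists ((1 + N y) / N d) => s /S_ub].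
have es : e <= sup S by apply: sup_upper_bound => //; split => //; exact: ltW.
exists (sup S); split; first exact: lt_le_trans es.
- apply/ler_addgt0Pr => eta eta0.
  have [s [s0 hs] ss] := sup_adherent (divr_gt0 eta0 Nd) supS.
  have sS : s <= sup S by apply: sup_upper_bound.
  have -> : y + sup S *: d = (y + s *: d) + (sup S - s) *: d.
    by apply/matrixP => i j; rewrite !mxE; ring.
  apply: le_trans (ND hN _ _) _; rewrite (NZ hN) ger0_norm ?subr_ge0 //.
  have : (sup S - s) * N d <= eta by rewrite -ler_pdivlMr //; lra.
  lra.
- move=> e' e'0; rewrite ltNge; apply/negP => h.
  have /(sup_upper_bound supS) : S (sup S + e') by split => //; lra.
  lra.
Qed.

Lemma ball_dirs_sub y y1 y2 t : N y1 <= 1 -> N y2 <= 1 -> 0 < t < 1 ->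
  y = t *: y1 + (1 - t) *: y2 -> ball_dirs y1 `<=` ball_dirs y.
Proof.
move=> h1 h2 /andP [t0 t1] ey d [e [e0 [g1 g2]]]; exists (t * e); split; first exact: mulr_gt0.
have ht : 0 <= t <= 1 by rewrite !ltW.
split.
  have -> : y + (t * e) *: d = t *: (y1 + e *: d) + (1 - t) *: y2.
    by rewrite ey; apply/matrixP => i j; rewrite !mxE; ring.
  exact: ball_convex.
have -> : y - (t * e) *: d = t *: (y1 - e *: d) + (1 - t) *: y2.
  by rewrite ey; apply/matrixP => i j; rewrite !mxE; ring.
exact: ball_convex.
Qed.

Lemma ball_dirs_rank_step k y y' d : N y <= 1 -> N y' <= 1 ->
  ball_dirs y d -> ~ ball_dirs y' d -> ball_dirs y' `<=` ball_dirs y ->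
  (forall W : 'M[R]_(k.+1, n), (forall i, ball_dirs y (row i W)) -> ~~ row_free W) ->
  (forall W : 'M[R]_(k, n), (forall i, ball_dirs y' (row i W)) -> ~~ row_free W).
Proof.
move=> hy hy' yd y'd sub H W hW; apply/negP => freeW.
have rows i : ball_dirs y (row i (col_mx d W : 'M_(1 + k, n))).
  case: (@split_ordP 1 k i) => j ->; first by rewrite rowKu row_id.
  by rewrite rowKd; apply: sub.
apply: (negP (H _ rows)); apply/inj_row_free => c.
rewrite -(@hsubmxK _ 1 1 k c) (@mul_row_col _ 1 1 k n).
set a := @lsubmx _ 1 1 k c; set b := @rsubmx _ 1 1 k c; rewrite [a]mx11_scalar mul_scalar_mx => e.
have a0 : a 0 0 = 0.
  apply: contra_notP y'd => /eqP a0.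
  have bW : b *m W = - (a 0 0 *: d) by apply/eqP; rewrite -addr_eq0 addrC e.
  have -> : d = (- (a 0 0)^-1 *: b) *m W.
    by rewrite -scalemxAl bW scalerN scaleNr opprK scalerA mulVf // scale1r.
  exact: ball_dirs_mulmx.
have b0 : b = 0 by apply: (row_free_inj freeW); rewrite mul0mx -e a0 scale0r add0r.
by rewrite a0 b0 (_ : (0 : R)%:M = 0) ?row_mx0 //; apply/matrixP => i j; rewrite !mxE mul0rn.
Qed.

(* Along a direction d at y, go to the two points where the line leaves the
   ball: y is a convex combination of them, and at each of them d is no longer
   a direction, so the space of directions has dropped in dimension. *)
Lemma in_hull_of_ball_dirs k y : N y <= 1 ->
  (forall W : 'M[R]_(k, n), (forall i, ball_dirs y (row i W)) -> ~~ row_free W) ->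
  in_hull (extreme (unit_ball N)) y.
Proof.
elim: k y => [|k IH] y hy H.
  by have := H 0 (fun i => ltac:(by case: i)); rewrite /row_free mxrank0.
have [[d [yd d0]]|nd] := pselect (exists d, ball_dirs y d /\ d != 0); last first.
  apply/in_hull1/extreme_of_ball_dirs => // d yd; apply: contra_notP nd => /eqP d0.
  by exists d.
have [s1 [s10 h1 o1]] := ball_exit hy yd d0.
have Nd0 : - d != 0 by rewrite oppr_eq0.
have [s2 [s20 h2 o2]] := ball_exit hy (ball_dirsN yd) Nd0.
set y1 := y + s1 *: d in h1 o1; set y2 := y + s2 *: - d in h2 o2.
have s12 : s1 + s2 != 0 by rewrite gt_eqF // addr_gt0.
have t12 (s s' : R) : 0 < s -> 0 < s' -> 0 < s / (s + s') < 1.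
  by move=> s0 s'0; rewrite divr_gt0 ?addr_gt0 //= ltr_pdivrMr ?addr_gt0 // mul1r ltrDl.
have ey : y = (s2 / (s2 + s1)) *: y1 + (1 - s2 / (s2 + s1)) *: y2.
  by rewrite /y1 /y2; apply/matrixP => i j; rewrite !mxE; field; rewrite addrC.
have ey' : y = (s1 / (s1 + s2)) *: y2 + (1 - s1 / (s1 + s2)) *: y1.
  by rewrite /y1 /y2; apply/matrixP => i j; rewrite !mxE; field.
have y1d : ~ ball_dirs y1 d.
  move=> [e [e0 [g _]]]; have := o1 e e0.
  by rewrite /y1 -addrA -scalerDl in g; lra.
have y2d : ~ ball_dirs y2 (- d).
  move=> [e [e0 [g _]]]; have := o2 e e0.
  by rewrite /y2 -addrA -scalerDl in g; lra.
have c1 := IH y1 h1 (ball_dirs_rank_step hy h1 yd y1d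
  (ball_dirs_sub h1 h2 (t12 _ _ s20 s10) ey) H).
have c2 := IH y2 h2 (ball_dirs_rank_step hy h2 (ball_dirsN yd) y2d
  (ball_dirs_sub h2 h1 (t12 _ _ s10 s20) ey') H).
have /andP [l0 l1] := t12 _ _ s20 s10.
by rewrite ey; apply: in_hull_comb => //; rewrite !ltW.
Qed.

Lemma minkowski y : N y <= 1 -> in_hull (extreme (unit_ball N)) y.
Proof.
move=> hy; apply: (@in_hull_of_ball_dirs n.+1) => // W _.
by rewrite /row_free ltn_eqF // ltnS rank_leq_col.
Qed.

End Minkowski.

Lemma exists_small_factor (R : realFieldType) (T : eqType) (s : seq T) (F G : T -> R) :
  (forall t, t \in s -> 0 < G t) ->
  exists2 e, 0 < e & forall t, t \in s -> e * `|F t| < G t.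
Proof.
elim: s => [|a s IH] G_gt0; first by exists 1.
have [e e0 He] := IH (fun t ts => G_gt0 t (mem_behead (ts : t \in behead (a :: s)))).
have Ga := G_gt0 a (mem_head _ _).
pose e' := Num.min e (G a / (`|F a| + 1)).
have e'0 : 0 < e' by rewrite lt_min e0 divr_gt0 // ltr_wpDl.
exists e' => // t; rewrite inE => /orP [/eqP ->|ts].
  apply: (@le_lt_trans _ _ (G a / (`|F a| + 1) * `|F a|)).
    by apply: ler_wpM2r; rewrite ?ge_min ?lexx ?orbT.
  by rewrite mulrAC ltr_pdivrMr ?ltr_wpDl // mulrDr mulr1 ltrDl.
by apply: le_lt_trans (He t ts); apply: ler_wpM2r; rewrite ?ge_min ?lexx.
Qed.

Lemma seq_argmin (R : realDomainType) (T : eqType) (s : seq T) (h : T -> R) :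
  s != [::] -> exists2 t, t \in s & forall u, u \in s -> h t <= h u.
Proof.
elim: s => [//|a s IH] _; have [->|s0] := eqVneq s [::].
  by exists a; rewrite ?mem_head // => u; rewrite inE => /eqP ->.
have [t ts Ht] := IH s0; have [ha|ha] := leP (h a) (h t).
  exists a; first exact: mem_head.
  by move=> u; rewrite inE => /orP [/eqP ->//|us]; exact: le_trans ha (Ht u us).
exists t; first by rewrite inE ts orbT.
by move=> u; rewrite inE => /orP [/eqP ->|us]; [exact: ltW | exact: Ht].
Qed.

Lemma count_lt_in (T : eqType) (s : seq T) (P Q : pred T) :
  {in s, forall t, P t -> Q t} -> (exists2 t, t \in s & Q t && ~~ P t) ->
  (count P s < count Q s)%N.
Proof.
move=> PQ [t ts /andP [Qt nPt]].
have -> : count P s = count P [seq u <- s | Q u].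
  rewrite count_filter; apply: eq_in_count => u us /=.
  by case: (boolP (P u)) => //= /(PQ u us) ->.
rewrite -[count Q s]size_filter -(count_predC P [seq u <- s | Q u]).
rewrite -[X in (X < _)%N]addn0 ltn_add2l -has_count.
by apply/hasP; exists t; rewrite ?mem_filter ?Qt.
Qed.

Section DualBall.
Variables (R : realType) (n : nat) (N : 'rV[R]_n -> R) (hN : is_norm N).
Variable sE : seq 'rV[R]_n.
Hypothesis hE : extreme (unit_ball N) = [set` sE].
Implicit Types (x y z w : 'rV[R]_n) (f g h e : 'cV[R]_n).

Lemma mem_ext_ball v : v \in sE -> N v <= 1.
Proof. by move=> vE; have : [set` sE] v by []; rewrite -hE => -[]. Qed.

Lemma fapp_ball_le f c x : (forall v, v \in sE -> fapp f v <= c) -> N x <= 1 ->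
  fapp f x <= c.
Proof.
move=> fc /(minkowski hN) [s [ps s1 ->]].
rewrite fapp_sumr -[c]mul1r -s1 mulr_suml big_seq [X in _ <= X]big_seq.
apply: ler_sum => p /ps [p0 pE]; rewrite fappZr ler_wpM2l // fc //.
by move: pE; rewrite hE.
Qed.

Lemma fapp_le_ext f c : (forall v, v \in sE -> fapp f v <= c) ->
  forall x, fapp f x <= c * N x.
Proof. by move=> fc; apply: fapp_le_of_ball => // x; exact: fapp_ball_le. Qed.

Lemma dual_le0_eq0 g : (forall v, v \in sE -> fapp g v <= 0) -> g = 0.
Proof.
move=> g_le0; have {}g_le0 x : fapp g x <= 0.
  by have := fapp_le_ext g_le0 x; rewrite mul0r.
apply: fapp_inj => x; apply/eqP; rewrite fapp0l eq_le g_le0 /=.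
by have := g_le0 (- x); rewrite fappNr oppr_le0.
Qed.

Let abs_values f := [set `|fapp f x| | x in [set x | N x <= 1]].

Lemma has_sup_abs_values f : has_sup (abs_values f).
Proof.
split; first by exists `|fapp f 0|, 0 => //=; rewrite (N0 hN).
pose M := \big[Num.max/0]_(v <- sE) `|fapp f v|.
have vM v : v \in sE -> `|fapp f v| <= M by move=> vE; exact: (le_bigmax_seq 0 _ predT _ vE).
exists M => _ [x hx <-]; rewrite ler_norml lerNl -fappNl.
apply/andP; split; apply: fapp_ball_le hx => v vE.
  by rewrite fappNl (le_trans _ (vM v vE)) // -normrN ler_norm.
exact: le_trans (ler_norm _) (vM v vE).
Qed.

Lemma dualnorm_ub f x : N x <= 1 -> `|fapp f x| <= dualnorm N f.
Proof. by move=> hx; apply: (sup_upper_bound (has_sup_abs_values f)); exists x. Qed.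

Lemma dualnorm_le f c : (forall x, N x <= 1 -> `|fapp f x| <= c) -> dualnorm N f <= c.
Proof.
by move=> fc; apply: ge_sup => [|_ [x hx <-]]; [case: (has_sup_abs_values f) | exact: fc].
Qed.

Lemma fapp_le_dualnorm f x : fapp f x <= dualnorm N f * N x.
Proof. by apply: fapp_le_of_ball => // y hy; exact: le_trans (ler_norm _) (dualnorm_ub _ hy). Qed.

Lemma dual_unit_ballP f : dual_unit_ball N f <-> forall x, fapp f x <= N x.
Proof.
split=> [f1 x|fN]; first by apply: le_trans (fapp_le_dualnorm f x) _; rewrite ler_piMl ?(N_ge0 hN).
apply: dualnorm_le => x hx; rewrite ler_norml lerNl -fappNr !(le_trans (fN _)) //.
by rewrite (NN hN).
Qed.

Lemma JsetP x h : x != 0 ->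
  Jset N x h <-> (forall w, fapp h w <= N w) /\ fapp h x = N x.
Proof.
move=> x0; split=> [[h1 hx]|[hN' hx]].
  by split=> //; apply/dual_unit_ballP; rewrite /dual_unit_ball /= h1.
split=> //; apply/eqP; rewrite eq_le; apply/andP; split; first exact/dual_unit_ballP.
by have := fapp_le_dualnorm h x; rewrite hx -{1}[N x]mul1r ler_pM2r // (N_gt0 hN).
Qed.

Lemma Jset_nonempty x : x != 0 -> exists h, Jset N x h.
Proof. by move=> x0; have [h hx] := hahn_banach hN x; exists h; apply/JsetP. Qed.

Definition dual_poly := [set f | forall v, v \in sE -> fapp f v <= 1].

Lemma dual_polyP f : dual_poly f <-> forall x, fapp f x <= N x.
Proof.
split=> [f1 x|fN v vE]; first by have := fapp_le_ext f1 x; rewrite mul1r.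
exact: le_trans (fN v) (mem_ext_ball vE).
Qed.

Lemma dual_unit_ballE : dual_unit_ball N = dual_poly.
Proof. by apply/seteqP; split=> f; rewrite dual_unit_ballP dual_polyP. Qed.

Definition active f := [seq v <- sE | fapp f v == 1].

Definition spanning (A : seq 'rV[R]_n) :=
  forall g, (forall v, v \in A -> fapp g v = 0) -> g = 0.

Lemma spanning_active f : extreme dual_poly f -> spanning (active f).
Proof.
move=> [fP ext] g g_act.
have [e e0 He] := @exists_small_factor _ _ [seq v <- sE | fapp f v < 1] (fapp g)
  (fun v => 1 - fapp f v) (fun v => ltac:(by rewrite mem_filter subr_gt0 => /andP [])).
have fgP s : `|s| <= e -> dual_poly (f + s *: g).
  move=> se v vE; rewrite fappDl fappZl.
  have [fv|fv] := eqVneq (fapp f v) 1.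
    by rewrite g_act ?mulr0 ?addr0 ?fv // mem_filter fv eqxx.
  have fv1 : fapp f v < 1 by rewrite lt_neqAle fv fP.
  have := He v; rewrite mem_filter fv1 vE => /(_ isT).
  have : s * fapp g v <= e * `|fapp g v|.
    by apply: le_trans (ler_norm _) _; rewrite normrM ler_wpM2r.
  lra.
have ef : f = 1 / 2 *: (f + e *: g) + (1 - 1 / 2) *: (f + (- e) *: g).
  by apply/matrixP => i j; rewrite !mxE; field.
have half : ((0 : R) < 1 / 2) && (1 / 2 < (1 : R)) by apply/andP; split; lra.
have ee : `|e| <= e by rewrite gtr0_norm.
have Nee : `|- e| <= e by rewrite normrN.
have [ea _] := ext _ _ _ (fgP e ee) (fgP (- e) Nee) half ef.
have /eqP : e *: g = 0 by rewrite -(addKr f (e *: g)) ea addNr.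
by rewrite scaler_eq0 gt_eqF //= => /eqP.
Qed.

Lemma extreme_dual_polyP f :
  extreme dual_poly f <-> dual_poly f /\ spanning (active f).
Proof.
split=> [fe|[fP sp]]; first by split; [exact: fe.1 | exact: spanning_active].
split=> // a b t aP bP /andP [t0 t1] ef.
have act1 v : v \in active f -> fapp a v = 1 /\ fapp b v = 1.
  rewrite mem_filter => /andP [/eqP fv vE]; have := aP v vE; have := bP v vE.
  by move: fv; rewrite ef fappDl !fappZl => *; split; nra.
suff eqf c : (forall v, v \in active f -> fapp c v = 1) -> c = f.
  by split; apply: eqf => v /act1 [].
move=> c1; apply/eqP; rewrite -subr_eq0; apply/eqP; apply: sp => v va.
by move: (va); rewrite fappBl c1 // mem_filter => /andP [/eqP -> _]; rewrite subrr.
Qed.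

Definition active_pattern f : {ffun 'I_(size sE) -> bool} :=
  [ffun i : 'I_(size sE) => fapp f (nth 0 sE i) == 1].

Lemma extreme_active_inj e e' : extreme dual_poly e -> extreme dual_poly e' ->
  active_pattern e = active_pattern e' -> e = e'.
Proof.
move=> /extreme_dual_polyP [_ sp] _ pe; apply/eqP; rewrite eq_sym -subr_eq0.
apply/eqP; apply: sp => v; rewrite mem_filter => /andP [/eqP ev vE].
have iv : (index v sE < size sE)%N by rewrite index_mem.
move/ffunP/(_ (Ordinal iv)): pe; rewrite !ffunE /= nth_index // ev eqxx.
by move=> /esym/eqP e'v; rewrite fappBl e'v ev subrr.
Qed.

(* By [extreme_active_inj], [xget] picking one extreme point for each realised
   pattern of active constraints enumerates all of them. *)
Let with_pattern p := [set e | extreme dual_poly e /\ active_pattern e = p].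

Definition dual_ext := [seq xget 0 (with_pattern p) |
  p <- enum {ffun 'I_(size sE) -> bool} & `[< exists e, with_pattern p e >]].

Lemma mem_dual_ext e : e \in dual_ext <-> extreme dual_poly e.
Proof.
split=> [|ee].
  case/mapP => p; rewrite mem_filter => /andP [/asboolP pex _] ->.
  by case: (xgetPex 0 pex).
have pe : with_pattern (active_pattern e) e by [].
have [ee' pe'] : with_pattern (active_pattern e) (xget 0 (with_pattern (active_pattern e))).
  exact: xgetPex (ex_intro _ _ pe).
apply/mapP; exists (active_pattern e).
  by rewrite mem_filter mem_enum andbT; apply/asboolP; exists e.
exact: extreme_active_inj.
Qed.

Definition slack f := count (fun v => fapp f v < 1) sE.

Lemma dual_poly_step f g : dual_poly f -> g != 0 ->
  (forall v, v \in active f -> fapp g v = 0) ->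
  exists t, [/\ 0 < t, dual_poly (f + t *: g) & (slack (f + t *: g) < slack f)%N].
Proof.
move=> fP g0 g_act.
pose sp := [seq v <- sE | 0 < fapp g v].
have sp0 : sp != [::].
  apply: contraNneq g0 => sp_nil; apply/eqP/dual_le0_eq0 => v vE.
  rewrite leNgt; apply/negP => gv; have : v \in sp by rewrite mem_filter gv vE.
  by rewrite sp_nil.
have [w ws Hw] := seq_argmin (fun v => (1 - fapp f v) / fapp g v) sp0.
move: ws; rewrite mem_filter => /andP [gw wE].
have fw : fapp f w < 1.
  rewrite lt_neqAle fP // andbT; apply: contraTneq gw => fw.
  by rewrite g_act ?ltxx // mem_filter fw eqxx.
exists ((1 - fapp f w) / fapp g w); split.
- by rewrite divr_gt0 // subr_gt0.
- move=> v vE; rewrite fappDl fappZl.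
  have [gv|gv] := ltP 0 (fapp g v).
    have := Hw v; rewrite mem_filter gv vE => /(_ isT) h.
    by have := ler_wpM2r (ltW gv) h; rewrite divfK ?gt_eqF //; lra.
  have : (1 - fapp f w) / fapp g w * fapp g v <= 0.
    by rewrite pmulr_rle0 // divr_gt0 // subr_gt0.
  by have := fP v vE; lra.
- apply: count_lt_in => [v vE /= h|]; last first.
    exists w => //; rewrite fw /= fappDl fappZl mulfVK ?gt_eqF //.
    by rewrite addrC subrK ltxx.
  rewrite lt_neqAle fP // andbT; apply: contraTneq h => fv.
  by rewrite fappDl fappZl (g_act v) ?mulr0 ?addr0 ?fv ?ltxx // /active mem_filter fv eqxx.
Qed.

Lemma dual_poly_in_hull f : dual_poly f -> in_hull (extreme dual_poly) f.
Proof.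
move=> fP; move: {2}(slack f).+1 (ltnSn (slack f)) => k.
elim: k f fP => [//|k IH] f fP; rewrite ltnS => fk.
have [sp|nsp] := pselect (spanning (active f)); first exact/in_hull1/extreme_dual_polyP.
have [g [g0 g_act]] : exists g, g != 0 /\ forall v, v \in active f -> fapp g v = 0.
  apply: contrapT => H; apply: nsp => g g_act; apply: contra_notP H => /eqP g0.
  by exists g.
have Ng0 : - g != 0 by rewrite oppr_eq0.
have Ng_act v : v \in active f -> fapp (- g) v = 0 by move=> va; rewrite fappNl g_act ?oppr0.
have [t1 [t10 P1 c1]] := dual_poly_step fP g0 g_act.
have [t2 [t20 P2 c2]] := dual_poly_step fP Ng0 Ng_act.
have -> : f = (t2 / (t1 + t2)) *: (f + t1 *: g) + (1 - t2 / (t1 + t2)) *: (f + t2 *: - g).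
  by apply/matrixP => i j; rewrite !mxE; field; rewrite gt_eqF // addr_gt0.
apply: in_hull_comb; [exact: IH (leq_trans c1 fk) | exact: IH (leq_trans c2 fk) |].
by rewrite divr_ge0 ?ler_pdivrMr ?mul1r ?lerDr ?ltW ?addr_gt0.
Qed.

(* The sum [z] of the extreme points of the ball active at [e] is normed by [e]
   alone: a norming functional is [1] on each of them, and they span. *)
Lemma Sm_nonempty e : (0 < n)%N -> extreme dual_poly e -> exists z, Sm N e z.
Proof.
move=> n0 ee; have [eP sp] := (extreme_dual_polyP e).1 ee.
set A := active e in sp.
have AE v : v \in A -> v \in sE /\ fapp e v = 1.
  by rewrite mem_filter => /andP [/eqP -> ->].
have A0 : A != [::].
  apply/eqP => A_nil.
  have /matrixP/(_ (Ordinal n0) 0) : delta_mx (Ordinal n0) 0 = 0 :> 'cV[R]_n.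
    by apply: sp => v; rewrite A_nil.
  by rewrite !mxE !eqxx => /eqP; rewrite oner_eq0.
pose z := \sum_(v <- A) v.
have ez : fapp e z = (size A)%:R.
  rewrite fapp_sumr -sum1_size natr_sum big_seq [RHS]big_seq.
  by apply: eq_bigr => v /AE [].
have Nz : N z = (size A)%:R.
  apply/eqP; rewrite eq_le -{2}ez (dual_polyP e).1 // andbT.
  apply: le_trans (N_sum hN _ _) _; rewrite -sum1_size natr_sum big_seq [X in _ <= X]big_seq.
  by apply: ler_sum => v /AE [/mem_ext_ball].
have z0 : z != 0.
  apply: contraNneq A0 => z0; move: Nz; rewrite z0 (N0 hN) => /esym/eqP.
  by rewrite pnatr_eq0 size_eq0.
exists z; split => //; apply/seteqP; split=> h; last first.
  by move=> ->; apply/JsetP; rewrite // ez Nz; split=> //; exact/dual_polyP.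
move/(JsetP _ z0) => [hN' hz] /=.
have h1 v : v \in A -> fapp h v = 1.
  have slack0 : \sum_(v <- A) (1 - fapp h v) == 0.
    by rewrite sumrB -fapp_sumr hz Nz -sum1_size natr_sum subrr.
  move: slack0; rewrite big_seq psumr_eq0 => [/allP h1 vA|u uA].
    by apply/eqP; rewrite eq_sym -subr_eq0; apply: implyP (h1 v vA) vA.
  by rewrite subr_ge0 (le_trans (hN' u)) // mem_ext_ball // (AE u uA).1.
apply/eqP; rewrite -subr_eq0; apply/eqP; apply: sp => v vA.
by rewrite fappBl h1 // (AE v vA).2 subrr.
Qed.

Lemma hull_attain (s : seq (R * 'cV[R]_n)) w :
  (forall p, p \in s -> 0 <= p.1 /\ dual_poly p.2) -> \sum_(p <- s) p.1 = 1 ->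
  fapp (\sum_(p <- s) p.1 *: p.2) w = N w ->
  forall p, p \in s -> 0 < p.1 -> fapp p.2 w = N w.
Proof.
move=> sP s1 hw p ps p0.
have gap_ge0 q : q \in s -> 0 <= q.1 * (N w - fapp q.2 w).
  by move=> /sP [q0 /dual_polyP qN]; rewrite mulr_ge0 // subr_ge0.
have : \sum_(q <- s) q.1 * (N w - fapp q.2 w) == 0.
  under eq_bigr do rewrite mulrBr.
  rewrite sumrB -mulr_suml s1 mul1r -hw fapp_suml.
  by under eq_bigr do rewrite fappZl; rewrite subrr.
rewrite big_seq psumr_eq0 => [/allP/(_ p ps)|q]; last exact: gap_ge0.
by rewrite ps mulf_eq0 gt_eqF //= subr_eq0 => /eqP.
Qed.

Lemma extreme_attain h : dual_poly h ->
  exists e, extreme dual_poly e /\ forall w, fapp h w = N w -> fapp e w = N w.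
Proof.
move=> /dual_poly_in_hull [s [sP s1 ->]].
have [p ps p0] : exists2 p, p \in s & 0 < p.1.
  apply: contrapT => pos; move: s1; rewrite big_seq big1 => [/eqP|p ps].
    by rewrite eq_sym oner_eq0.
  apply/eqP; rewrite eq_le (sP p ps).1 andbT leNgt; apply/negP => p0.
  by apply: pos; exists p.
exists p.2; split; first exact: (sP p ps).2.
move=> w hw; apply: (hull_attain _ s1 hw ps p0) => q qs.
by have [q0 [qP _]] := sP q qs.
Qed.

Lemma Jset1 w e : w != 0 -> extreme dual_poly e ->
  (forall e', extreme dual_poly e' -> fapp e' w = N w -> e' = e) -> Jset N w = [set e].
Proof.
move=> w0 ee e_uniq.
have [h0 /(JsetP _ w0) [/dual_polyP h0P hw0]] := Jset_nonempty w0.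
have [e1 [ee1 attain1]] := extreme_attain h0P.
have ew : fapp e w = N w by rewrite -(e_uniq e1 ee1 (attain1 w hw0)); exact: attain1.
apply/seteqP; split=> h; last first.
  by move=> /= ->; apply/(JsetP _ w0); split=> //; exact/dual_polyP/ee.1.
move/(JsetP _ w0) => [/dual_polyP hP hw] /=.
have [s [sP s1 eh]] := dual_poly_in_hull hP.
have sP' q : q \in s -> 0 <= q.1 /\ dual_poly q.2 by move=> /sP [? []].
rewrite eh -[e]scale1r -s1 scaler_suml big_seq [RHS]big_seq; apply: eq_bigr => q qs.
have [q0|q0] := eqVneq q.1 0; first by rewrite q0 !scale0r.
have q_gt0 : 0 < q.1 by rewrite lt_def q0 (sP q qs).1.
by rewrite (e_uniq _ (sP q qs).2 (hull_attain sP' s1 _ qs q_gt0)) // -eh.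
Qed.

Lemma extreme_le_N e x : extreme dual_poly e -> fapp e x <= N x.
Proof. by move=> [/dual_polyP eN _]. Qed.

Lemma Sm_support e z : Sm N e z -> (forall w, fapp e w <= N w) /\ fapp e z = N z.
Proof. by move=> [z0 Jz]; apply/(JsetP _ z0); rewrite Jz. Qed.

(* The finitely many other extreme points are strictly below [e] at [z], hence
   still at [z + t d] for small [t]. *)
Lemma Sm_radially_open e z d : extreme dual_poly e -> Sm N e z ->
  exists2 t0, 0 < t0 & forall t, 0 < t -> t <= t0 -> Sm N e (z + t *: d).
Proof.
move=> ee hz; have [_ ez] := Sm_support hz; have [z0 Jz] := hz.
have Nz := N_gt0 hN z0.
have other_lt e' : extreme dual_poly e' -> e' != e -> fapp e' z < N z.
  move=> ee' e'e; rewrite lt_neqAle extreme_le_N // andbT; apply: contra_neq e'e => e'z.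
  have : Jset N z e' by apply/(JsetP _ z0); split=> //; exact/dual_polyP/ee'.1.
  by rewrite Jz.
have [e1 e10 He1] := @exists_small_factor _ _ [seq e' <- dual_ext | e' != e]
  (fun e' => fapp e' d - fapp e d) (fun e' => N z - fapp e' z)
  (fun e' => ltac:(rewrite mem_filter subr_gt0 => /andP [e'e /mem_dual_ext ee'];
                   exact: other_lt)).
pose e2 := N z / (`|fapp e d| + 1).
have e20 : 0 < e2 by rewrite divr_gt0 // ltr_wpDl.
exists (Num.min e1 e2); first by rewrite lt_min e10 e20.
move=> t t0; rewrite le_min => /andP [te1 te2].
set w := z + t *: d.
have ew : fapp e w = N z + t * fapp e d by rewrite fappDr fappZr ez.
have ew0 : 0 < fapp e w.
  have : t * `|fapp e d| < N z.
    apply: le_lt_trans (ler_wpM2r (normr_ge0 _) te2) _.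
    by rewrite mulrAC ltr_pdivrMr ?ltr_wpDl // mulrDr mulr1 ltrDl.
  by rewrite ew; have := ler_norm (- fapp e d); rewrite normrN; nra.
have w0 : w != 0 by apply: contraTneq ew0 => ->; rewrite fapp0r ltxx.
split=> //; apply: Jset1 => // e' ee' e'w; apply/eqP; apply: contraT => e'e.
have e'in : e' \in [seq e' <- dual_ext | e' != e] by rewrite mem_filter e'e; exact/mem_dual_ext.
have := He1 e' e'in.
have : t * (fapp e' d - fapp e d) <= e1 * `|fapp e' d - fapp e d|.
  by apply: le_trans (ler_norm _) _; rewrite normrM (gtr0_norm t0) ler_wpM2r.
have := extreme_le_N w ee; rewrite -e'w ew fappDr fappZr; lra.
Qed.

Lemma Jset1_of_separating w : w != 0 ->
  (forall e1 e2, e1 \in dual_ext -> e2 \in dual_ext -> e1 != e2 -> fapp e1 w != fapp e2 w) ->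
  exists g, extreme dual_poly g /\ Jset N w = [set g].
Proof.
move=> w0 sep; have [h0 /(JsetP _ w0) [/dual_polyP h0P hw0]] := Jset_nonempty w0.
have [e [ee attain]] := extreme_attain h0P.
exists e; split=> //; apply: Jset1 => // e' ee' e'w; apply/eqP; apply: contraT => e'e.
by have := sep _ _ ((mem_dual_ext e').2 ee') ((mem_dual_ext e).2 ee) e'e; rewrite e'w attain ?eqxx.
Qed.

Lemma tea_of_common_support a x y : (forall w, fapp a w <= N w) ->
  fapp a x = N x -> fapp a y = N y -> tea_pair N x y.
Proof.
move=> aN ax ay; apply/eqP; rewrite eq_le ND //=.
by have := aN (x + y); rewrite fappDr ax ay.
Qed.

Lemma common_support_of_tea x y : tea_pair N x y -> x + y != 0 ->
  exists a, [/\ forall w, fapp a w <= N w, fapp a x = N x & fapp a y = N y].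
Proof.
move=> xy xy0; have [a /(JsetP _ xy0) [aN]] := Jset_nonempty xy0.
rewrite fappDr xy => axy; have := aN x; have := aN y.
by exists a; split=> //; lra.
Qed.

Lemma attain_of_limit g a b : (forall w, fapp g w <= N w) ->
  (forall s, 0 < s -> fapp g (a + s *: b) = N (a + s *: b)) -> fapp g a = N a.
Proof.
move=> gN g_attain; apply/eqP; rewrite eq_le gN /=.
apply/ler_addgt0Pr => eps eps0.
pose c := N b + `|fapp g b| + 1.
have c0 : 0 < c by rewrite ltr_wpDl // addr_ge0 ?(N_ge0 hN).
pose s := eps / c.
have s0 : 0 < s by rewrite divr_gt0.
have sc : s * c = eps by rewrite divfK ?gt_eqF.
have := g_attain s s0; rewrite fappDr fappZr => gs.
have := NB hN (a + s *: b) (s *: b); rewrite addrK (NZ hN) (gtr0_norm s0) -gs.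
have := ler_norm (fapp g b); have := ler_norm (- fapp g b); rewrite normrN.
by rewrite /c in sc; nra.
Qed.

Lemma Sm_shift e x z s : fapp e x = N x -> Sm N e z -> 0 < s -> Sm N e (x + s *: z).
Proof.
move=> ex hz s0; have [eN ez] := Sm_support hz; have [z0 Jz] := hz.
have Nz := N_gt0 hN z0; have Nx := N_ge0 hN x.
set w := x + s *: z.
have ew : fapp e w = N x + s * N z by rewrite fappDr fappZr ex ez.
have Nw : N w = N x + s * N z.
  apply/eqP; rewrite eq_le -{2}ew eN andbT.
  by apply: le_trans (ND hN _ _) _; rewrite (NZ hN) (gtr0_norm s0).
have w0 : w != 0.
  by apply: contraTneq (_ : 0 < N w) => [->|]; rewrite ?(N0 hN) ?ltxx // Nw; nra.
split=> //; apply/seteqP; split=> h; last by move=> /= ->; apply/(JsetP _ w0); rewrite ew Nw.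
move/(JsetP _ w0) => [hN' hw] /=.
have : Jset N z h.
  apply/(JsetP _ z0); split=> //; move: hw; rewrite Nw fappDr fappZr.
  by have := hN' x; have := hN' z; nra.
by rewrite Jz.
Qed.

Lemma Sm_convex e z z' s : Sm N e z -> Sm N e z' -> 0 <= s <= 1 ->
  Sm N e ((1 - s) *: z + s *: z').
Proof.
move=> hz hz' /andP [s0 s1]; have [s_eq1|s_neq1] := eqVneq s 1.
  by rewrite s_eq1 subrr scale0r add0r scale1r.
rewrite addrC; apply: Sm_shift hz _; last by rewrite subr_gt0 lt_neqAle s_neq1.
by rewrite fappZr (NZ hN) ger0_norm // (Sm_support hz').2.
Qed.

Lemma extreme_of_Jset1 x g : x != 0 -> Jset N x = [set g] -> extreme dual_poly g.
Proof.
move=> x0 Jx; have /(JsetP _ x0) [gN gx] : Jset N x g by rewrite Jx.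
split=> [|a b t aP bP /andP [t0 t1] eg]; first exact/dual_polyP.
have ax := (dual_polyP a).1 aP x; have bx := (dual_polyP b).1 bP x.
rewrite eg fappDl !fappZl in gx.
have /(JsetP _ x0) : (forall w, fapp a w <= N w) /\ fapp a x = N x.
  by split; [exact/dual_polyP | nra].
have /(JsetP _ x0) : (forall w, fapp b w <= N w) /\ fapp b x = N x.
  by split; [exact/dual_polyP | nra].
by rewrite Jx /= => -> ->.
Qed.

Lemma Jset1_parallel u w g : u != 0 -> Jset N u = [set g] -> parallel_pair N u w ->
  `|fapp g w| = N w.
Proof.
move=> u0 Ju [l [l1 el]].
have tea : tea_pair N u (l *: w) by rewrite /tea_pair el (NZ hN) l1 mul1r.
have ulw0 : u + l *: w != 0.
  apply: contraTneq (N_gt0 hN u0) => ulw0; rewrite -leNgt.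
  by have := N_ge0 hN w; move: el; rewrite ulw0 (N0 hN); lra.
have [a [aN au alw]] := common_support_of_tea tea ulw0.
have /(JsetP _ u0) : (forall w, fapp a w <= N w) /\ fapp a u = N u by [].
rewrite Ju => /= ag; move: alw; rewrite ag fappZr (NZ hN) l1 mul1r => glw.
have pos : 0 <= l * fapp g w by rewrite glw (N_ge0 hN).
by rewrite -glw -(ger0_norm pos) normrM l1 mul1r.
Qed.

End DualBall.

Lemma avoid_hyperplanes (R : realType) (n : nat) (I : eqType) (U : set 'rV[R]_n)
    (s : seq I) (phi : I -> 'rV[R]_n -> R) z0 : U z0 ->
  (forall z d, U z -> exists2 t0, 0 < t0 & forall t, 0 < t -> t <= t0 -> U (z + t *: d)) ->
  (forall i, i \in s -> (forall x y t, phi i (x + t *: y) = phi i x + t * phi i y) /\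
                        exists d, phi i d != 0) ->
  exists2 z, U z & forall i, i \in s -> phi i z != 0.
Proof.
move=> Uz0 U_open; elim: s => [|a s IH] phi_lin; first by exists z0.
have [z Uz phi_z] := IH (fun i iis => phi_lin i (mem_behead (iis : i \in behead (a :: s)))).
have [phiD [d da]] := phi_lin a (mem_head _ _).
have [az|az] := eqVneq (phi a z) 0; last first.
  by exists z => // i; rewrite inE => /orP [/eqP ->|]; last exact: phi_z.
have [t0 t00 Ut0] := U_open z d Uz.
have [ep ep0 Hep] := @exists_small_factor _ _ s (fun i => phi i d) (fun i => `|phi i z|)
  (fun i iis => ltac:(by rewrite normr_gt0; exact: phi_z i iis)).
pose t := Num.min ep t0.
have t_gt0 : 0 < t by rewrite lt_min ep0 t00.
exists (z + t *: d); first by apply: Ut0 => //; rewrite ge_min lexx orbT.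
move=> i; rewrite inE => /orP [/eqP ->|iis].
  by rewrite phiD az add0r mulf_neq0 // gt_eqF.
have [iD _] := phi_lin i (mem_behead (iis : i \in behead (a :: s))).
rewrite iD; apply: contraTneq (Hep i iis) => /eqP; rewrite addr_eq0 => /eqP ->.
rewrite normrN normrM (gtr0_norm t_gt0) -leNgt ler_wpM2r //.
by rewrite ge_min lexx.
Qed.

Section Transfer.
Variables (R : realType) (n m : nat) (NX : 'rV[R]_n -> R) (NY : 'rV[R]_m -> R).
Hypotheses (hNX : is_norm NX) (hNY : is_norm NY).
Variables (sX : seq 'rV[R]_n) (sY : seq 'rV[R]_m).
Hypotheses (hX : extreme (unit_ball NX) = [set` sX])
  (hY : extreme (unit_ball NY) = [set` sY]).
Variables (T : {linear 'rV[R]_n -> 'rV[R]_m}) (Ti : 'rV[R]_m -> 'rV[R]_n).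
Hypotheses (TK : cancel T Ti) (TiK : cancel Ti T).

Definition preserves_parallel :=
  forall x y, parallel_pair NX x y -> parallel_pair NY (T x) (T y).
Definition preserves_tea := forall x y, tea_pair NX x y -> tea_pair NY (T x) (T y).
Definition Sm_transfer := forall f, extreme (dual_unit_ball NX) f ->
  exists! g, extreme (dual_unit_ball NY) g /\ T @` Sm NX f `<=` Sm NY g.
Definition Sm_supported := forall f, extreme (dual_poly sX) f ->
  exists g, (forall w, fapp g w <= NY w) /\ forall z, Sm NX f z -> fapp g (T z) = NY (T z).

Lemma T_eq0 z : (T z == 0) = (z == 0).
Proof. exact: raddf_eq0 (can_inj TK). Qed.

Lemma parallel_of_tea : preserves_tea -> preserves_parallel.
Proof.
move=> Ttea x y [l [l1 el]]; exists l; split=> //.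
have /Ttea : tea_pair NX x (l *: y) by rewrite /tea_pair el (NZ hNX) l1 mul1r.
by rewrite /tea_pair linearZ => ->; rewrite (NZ hNY) l1 mul1r.
Qed.

(* A common support functional of [x] and [y] lies below an extreme one, [e];
   [x + s z0] and [y + s z0] lie in [Sm e], and [s -> 0] shows that the
   functional [g] given for [e] norms [T x] and [T y]. *)
Lemma tea_of_Sm_supported : Sm_supported -> preserves_tea.
Proof.
move=> supp x y xy; have [xy0|xy0] := eqVneq (x + y) 0.
  have Nx0 : NX x = 0.
    have := N_ge0 hNX x; have := N_ge0 hNX y.
    by move: xy; rewrite /tea_pair xy0 (N0 hNX); lra.
  have y0 : y = - x by apply/eqP; rewrite -addr_eq0 addrC xy0.
  by rewrite /tea_pair y0 (N_eq0 hNX Nx0) oppr0 linear0 addr0 (N0 hNY) addr0.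
have [a [aN ax ay]] := common_support_of_tea hNX hX xy xy0.
have [e [ee e_attain]] := extreme_attain hNX hX ((dual_polyP hNX hX a).2 aN).
have n0 : (0 < n)%N.
  case: posnP => // n0; case/eqP: xy0; apply/matrixP => i j.
  by have := ltn_ord j; rewrite [X in (_ < X)%N]n0.
have [z0 hz0] := Sm_nonempty hNX hX n0 ee.
have [g [gN g_attain]] := supp e ee.
have T_attain u : fapp e u = NX u -> fapp g (T u) = NY (T u).
  move=> eu; apply: (attain_of_limit hNY (b := T z0) gN) => s s0.
  by rewrite -linearZ -linearD; exact: g_attain _ (Sm_shift hNX hX eu hz0 s0).
by apply: (tea_of_common_support hNY gN); apply: T_attain; exact: e_attain.
Qed.

Lemma Sm_supported_of_transfer : Sm_transfer -> Sm_supported.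
Proof.
move=> tr f ef; have ef' : extreme (dual_unit_ball NX) f by rewrite (dual_unit_ballE hNX hX).
have [g [[eg sub] _]] := tr f ef'.
exists g; split=> [w|z hz].
  by apply: (extreme_le_N hNY hY); rewrite -(dual_unit_ballE hNY hY).
exact: (Sm_support hNY hY (sub _ (ex_intro2 _ _ z hz erefl))).2.
Qed.

(* [z] is taken in [Sm f] off the finitely many hyperplanes on which two
   extreme functionals of the dual ball of [Y] agree at [T z]. *)
Lemma Sm_generic_image f : (0 < n)%N -> extreme (dual_poly sX) f ->
  exists z g, Sm NX f z /\ Jset NY (T z) = [set g].
Proof.
move=> n0 ef; have [z1 hz1] := Sm_nonempty hNX hX n0 ef.
pose pairs := [seq p <- [seq (e1, e2) | e1 <- dual_ext sY, e2 <- dual_ext sY] | p.1 != p.2].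
pose phi (p : 'cV[R]_m * 'cV[R]_m) z := fapp (p.1 - p.2) (T z).
have [||z hz sep] := @avoid_hyperplanes _ _ _ (Sm NX f) pairs phi z1 hz1.
- by move=> z d hz; apply: (Sm_radially_open hNX hX d ef hz).
- move=> p; rewrite mem_filter => /andP [p12 _]; split.
    by move=> x y t; rewrite /phi linearD linearZ fappDr fappZr.
  apply: contrapT => phi0; case/eqP: p12; apply/eqP; rewrite -subr_eq0; apply/eqP.
  apply: fapp_inj => y; rewrite fapp0l -(TiK y); apply: contrapT => phi_y.
  by apply: phi0; exists (Ti y); apply/eqP.
have Tz0 : T z != 0 by rewrite T_eq0; case: hz.
have [|g [_ Jg]] := Jset1_of_separating hNY hY Tz0; last by exists z, g.
move=> e1 e2 e1E e2E e12; rewrite -subr_eq0 -fappBl.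
by apply: (sep (e1, e2)); rewrite mem_filter e12 (allpairs_f pair e1E e2E).
Qed.

(* If [g (T z) < 0], then [g (T _)] vanishes at a point of the segment from [zs]
   to [z], where [|g (T _)| = NY (T _)] forces [T] to vanish. *)
Lemma Sm_supported_of_parallel : (0 < n)%N -> preserves_parallel -> Sm_supported.
Proof.
move=> n0 Tpar f ef; have [zs [g [hzs Jg]]] := Sm_generic_image n0 ef.
have Tzs0 : T zs != 0 by rewrite T_eq0; case: hzs.
have /(JsetP hNY hY _ Tzs0) [gN gzs] : Jset NY (T zs) g by rewrite Jg.
exists g; split=> // z hz.
pose zt t := (1 - t) *: zs + t *: z.
have abs_g t : 0 <= t <= 1 -> `|fapp g (T (zt t))| = NY (T (zt t)).
  move=> t01; have hzt := Sm_convex hNX hX hzs hz t01.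
  apply: (Jset1_parallel hNY hY Tzs0 Jg); apply: Tpar; exists 1; rewrite normr1 scale1r.
  have [fN fzs] := Sm_support hNX hX hzs; have [_ fzt] := Sm_support hNX hX hzt.
  by split=> //; apply: (tea_of_common_support hNX fN fzs fzt).
have Tz0 : T z != 0 by rewrite T_eq0; case: hz.
have := abs_g 1; rewrite /zt lexx ler01 subrr scale0r add0r scale1r => /(_ isT) gz.
apply/eqP; rewrite eq_le gN /= leNgt; apply/negP => gz_lt.
have {gz gz_lt} gz : fapp g (T z) = - NY (T z).
  have [g0|g0] := ltP (fapp g (T z)) 0; first by rewrite -gz ltr0_norm ?opprK.
  by move: gz_lt; rewrite -gz ger0_norm ?ltxx.
pose A := NY (T zs); pose B := NY (T z).
have A0 : 0 < A := N_gt0 hNY Tzs0; have B0 : 0 < B := N_gt0 hNY Tz0.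
pose t0 := A / (A + B).
have t01 : 0 <= t0 <= 1 by rewrite divr_ge0 ?ler_pdivrMr ?mul1r ?lerDl ?ltW ?addr_gt0.
have : T (zt t0) = 0.
  apply: (N_eq0 hNY); rewrite -abs_g // linearD !linearZ fappDr !fappZr gzs gz.
  by rewrite (_ : _ + _ = 0) ?normr0 // /t0 /A /B; field; rewrite gt_eqF ?addr_gt0.
by move/eqP; rewrite T_eq0; case: (Sm_convex hNX hX hzs hz t01) => /negPf ->.
Qed.

(* [z] lies strictly between [z'] and a point [w] of [Sm f] beyond it, so every
   support functional at [T z] also supports [T w] and [T z']. *)
Lemma Jset_image_sub f z z' : preserves_tea -> extreme (dual_poly sX) f ->
  Sm NX f z -> Sm NX f z' -> Jset NY (T z) `<=` Jset NY (T z').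
Proof.
move=> Ttea ef hz hz'.
have Tz0 : T z != 0 by rewrite T_eq0; case: hz.
have Tz'0 : T z' != 0 by rewrite T_eq0; case: hz'.
move=> h /(JsetP hNY hY _ Tz0) [hN' hz1]; apply/(JsetP hNY hY _ Tz'0); split=> //.
have [t t0 Ht] := Sm_radially_open hNX hX (z - z') ef hz.
have hw := Ht t t0 (lexx t); set w := z + t *: (z - z') in hw.
have [fN fw] := Sm_support hNX hX hw; have [_ fz'] := Sm_support hNX hX hz'.
have wz'0 : T w + T z' != 0.
  have : 0 < fapp f (w + z').
    rewrite fappDr fw fz'; have := N_ge0 hNX z'.
    by have := N_gt0 hNX (proj1 hw); lra.
  by rewrite -linearD T_eq0; apply: contraTneq => ->; rewrite fapp0r ltxx.
have wz' := Ttea _ _ (tea_of_common_support hNX fN fw fz').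
have [a [aN aw az']] := common_support_of_tea hNY hY wz' wz'0.
have ev : (1 + t) *: T z = T w + t *: T z'.
  by rewrite /w linearD linearZ linearB; apply/matrixP => i j; rewrite !mxE; ring.
have hsum : (1 + t) * NY (T z) = fapp h (T w) + t * fapp h (T z').
  by rewrite -hz1 -fappZr ev fappDr fappZr.
have asum : (1 + t) * fapp a (T z) = NY (T w) + t * NY (T z').
  by rewrite -aw -az' -fappZr ev fappDr fappZr.
have := aN (T z); have := hN' (T w); have := hN' (T z'); nra.
Qed.

Lemma Jset_image1 f z : preserves_tea -> extreme (dual_poly sX) f -> Sm NX f z ->
  exists g, Jset NY (T z) = [set g].
Proof.
move=> Ttea ef hz; have Tz0 : T z != 0 by rewrite T_eq0; case: hz.
have [g Jg] := Jset_nonempty hNY hY Tz0.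
exists g; apply/seteqP; split=> h; last by move=> /= ->.
move=> Jh /=; apply: fapp_inj => y.
have [t t0 Ht] := Sm_radially_open hNX hX (Ti y) ef hz.
have hw := Ht t t0 (lexx t).
have Tw0 : T (z + t *: Ti y) != 0 by rewrite T_eq0; case: hw.
have /(JsetP hNY hY _ Tw0) [_ hw1] := Jset_image_sub Ttea ef hz hw Jh.
have /(JsetP hNY hY _ Tw0) [_ gw1] := Jset_image_sub Ttea ef hz hw Jg.
have /(JsetP hNY hY _ Tz0) [_ hz1] := Jh; have /(JsetP hNY hY _ Tz0) [_ gz1] := Jg.
move: hw1 gw1; rewrite linearD linearZ /= TiK !fappDr !fappZr hz1 gz1 => hw1 gw1.
have /eqP : t * (fapp h y - fapp g y) = 0 by rewrite mulrBr; lra.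
by rewrite mulf_eq0 gt_eqF //= subr_eq0 => /eqP.
Qed.

Lemma transfer_of_tea : (0 < n)%N -> preserves_tea -> Sm_transfer.
Proof.
move=> n0 Ttea f; rewrite (dual_unit_ballE hNX hX) => ef.
have [z0 hz0] := Sm_nonempty hNX hX n0 ef.
have Tz0 : T z0 != 0 by rewrite T_eq0; case: hz0.
have [g Jg] := Jset_image1 Ttea ef hz0.
exists g; split.
  split; first by rewrite (dual_unit_ballE hNY hY); apply: (extreme_of_Jset1 hNY hY Tz0 Jg).
  move=> _ [z hz <-]; split; first by rewrite T_eq0; case: hz.
  rewrite -Jg; apply/seteqP; split.
    exact: (Jset_image_sub Ttea ef hz hz0).
  exact: (Jset_image_sub Ttea ef hz0 hz).
move=> g' [_ sub]; have [_ Jg'] := sub (T z0) (ex_intro2 _ _ z0 hz0 erefl).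
by suff : [set g'] g by []; rewrite -Jg' Jg.
Qed.

Lemma transfer_dim0 : n = 0%N -> [/\ preserves_parallel, preserves_tea & Sm_transfer].
Proof.
move=> n0.
have X0 (x : 'rV[R]_n) : x = 0.
  by apply/matrixP => i j; have := ltn_ord j; rewrite [X in (_ < X)%N]n0.
have Y0 (y : 'rV[R]_m) : y = 0 by rewrite -(TiK y) (X0 (Ti y)) linear0.
have C0 (h : 'cV[R]_m) : h = 0 by apply: fapp_inj => y; rewrite (Y0 y) fapp0r fapp0l.
have TY0 x : T x = 0 := Y0 (T x).
split.
- by move=> x y _; exists 1; rewrite normr1 !TY0 scaler0 addr0 (N0 hNY) addr0.
- by move=> x y _; rewrite /tea_pair !TY0 addr0 (N0 hNY) addr0.
move=> f _; exists 0; split=> [|g' _]; last by rewrite (C0 g').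
split; last by move=> y [z [z0 _] _]; rewrite (X0 z) eqxx in z0.
rewrite (dual_unit_ballE hNY hY); split=> [v _|a b t _ _ _ _]; first by rewrite fapp0l ler01.
by rewrite (C0 a) (C0 b).
Qed.

End Transfer.

Unset Implicit Arguments. Set Strict Implicit. Set Printing Implicit Defensive.

Theorem mainTheorem15 (R : realType) (n m : nat)
  (NX : 'rV[R]_n -> R) (NY : 'rV[R]_m -> R)
  (hNX : is_norm NX) (hNY : is_norm NY)
  (pX : polyhedral NX) (pY : polyhedral NY)
  (T : {linear 'rV[R]_n -> 'rV[R]_m}) (hT : bijective T) :
  ((forall x y, parallel_pair NX x y -> parallel_pair NY (T x) (T y)) <->
   (forall x y, tea_pair NX x y -> tea_pair NY (T x) (T y))) /\
  ((forall x y, tea_pair NX x y -> tea_pair NY (T x) (T y)) <->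
   (forall f, extreme (dual_unit_ball NX) f ->
      exists! g, extreme (dual_unit_ball NY) g /\ T @` Sm NX f `<=` Sm NY g)).
Proof.
have [sX hX] := (finite_seqP _).1 pX; have [sY hY] := (finite_seqP _).1 pY.
have [Ti TK TiK] := hT.
have [n0|n_gt0] := posnP n.
  by have [] := transfer_dim0 NX hNY hY TiK n0.
have supported_tea := tea_of_Sm_supported hNX hNY hX.
split; split.
- by move=> Tpar; apply/supported_tea/(Sm_supported_of_parallel hNX hNY hX hY TK TiK n_gt0).
- apply: (parallel_of_tea hNX hNY).
- apply: (transfer_of_tea hNX hNY hX hY TK TiK n_gt0).
- by move=> Ttr; apply/supported_tea/(Sm_supported_of_transfer hNX hNY hX hY).
Qed.
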